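(* Let $c\ge\sqrt2$ and fix $\lambda\in(0,1]$. There do not exist a treasure hunt algorithm with advice and a constant $C>0$ such that, for every regular terrain (with respect to $c$), every initial agent position $p$ and every treasure position $q$ with treasure accessibility $\lambda$, the advice given by the oracle has length less than $\frac12\log_2(L/\lambda)$ and the agent sees the treasure at cost at most $C\cdot L$, where $L$ is the length of a shortest path in the terrain from $p$ to $q$. In other words, accomplishing treasure hunt at cost $O(L)$ in regular terrains requires advice of size $\Omega(\log(L/\lambda))$.
   Context: Model. A terrain is $\mathcal{T}=P_0\setminus(P_1\cup\dots\cup P_k)$, where $P_0$ is a closed polygon and the obstacles $P_1,\dots,P_k$ are pairwise disjoint open polygons in the interior of $P_0$. The treasure is an interior point $q$ of $\mathcal{T}$; the agent is a point starting at $p\in\mathcal{T}$, with a compass and unit of length, moving along polygonal lines in $\mathcal{T}$ (free moves interrupted detectably upon hitting the boundary, and boundary moves along the boundary). An agent at $a$ sees $b$ if the segment $ab$ lies in $\mathcal{T}$ and has length at most $1$. The agent initially knows neither the terrain nor $q$. A treasure hunt algorithm with advice: an oracle knowing $\mathcal{T}$, $p$ and $q$ gives the agent a binary string (advice) before it starts; the agent's deterministic algorithm uses this string. The cost is the length of the agent's trajectory until it first sees the treasure. The accessibility of the treasure is $\lambda=\min(1,\rho)$, $\rho$ being the largest radius of a disc centered at $q$ contained in $\mathcal{T}$. A polygon is $c$-fat if the ratio of the radius of the smallest disc containing it to the radius of the largest disc contained in it is at most $c$; a terrain is regular if $P_0$ is convex and all obstacles are convex and $c$-fat. *)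

From Stdlib Require Import Reals Lra List.
Open Scope R_scope.

Definition point := (R * R)%type.
Definition padd (a b : point) : point := (fst a + fst b, snd a + snd b).
Definition psub (a b : point) : point := (fst a - fst b, snd a - snd b).
Definition pscale (t : R) (a : point) : point := (t * fst a, t * snd a).
Definition pzero : point := (0, 0).
Definition dist (a b : point) : R :=
  sqrt ((fst a - fst b) ^ 2 + (snd a - snd b) ^ 2).

Definition log2 (x : R) : R := ln x / ln 2.

Fixpoint sumR (w : list R) : R :=
  match w with nil => 0 | a :: w' => a + sumR w' end.

Fixpoint combo (w : list R) (l : list point) : point :=
  match w, l with
  | a :: w', y :: l' => padd (pscale a y) (combo w' l')
  | _, _ => pzero
  end.

Definition in_hull (l : list point) (x : point) : Prop :=
  exists w : list R, length w = length l /\ Forall (fun a => 0 <= a) w /\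
    sumR w = 1 /\ x = combo w l.

Definition pinterior (S : point -> Prop) (x : point) : Prop :=
  exists r, 0 < r /\ forall y, dist x y < r -> S y.

Definition closed_cpoly (l : list point) : point -> Prop := in_hull l.
Definition open_cpoly (l : list point) : point -> Prop := pinterior (in_hull l).
Definition nondegenerate (l : list point) : Prop := exists x, open_cpoly l x.

(* P0 = closed convex polygon tP0, obstacles = open convex polygons tObs. *)
Record terrain := Terrain { tP0 : list point; tObs : list (list point) }.

Definition in_terrain (T : terrain) (x : point) : Prop :=
  closed_cpoly (tP0 T) x /\ Forall (fun O => ~ open_cpoly O x) (tObs T).

Definition wf_terrain (T : terrain) : Prop :=
  nondegenerate (tP0 T) /\
  Forall nondegenerate (tObs T) /\
  Forall (fun O => forall x, open_cpoly O x -> pinterior (closed_cpoly (tP0 T)) x)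
    (tObs T) /\
  (forall i j, (i < j < length (tObs T))%nat -> forall x,
     ~ (open_cpoly (nth i (tObs T) nil) x /\ open_cpoly (nth j (tObs T) nil) x)).

Definition min_enclosing_radius (S : point -> Prop) (R0 : R) : Prop :=
  (exists z, forall x, S x -> dist z x <= R0) /\
  (forall z R1, (forall x, S x -> dist z x <= R1) -> R0 <= R1).

Definition max_inscribed_radius (S : point -> Prop) (r0 : R) : Prop :=
  (exists z, forall x, dist z x < r0 -> S x) /\
  (forall z r1, (forall x, dist z x < r1 -> S x) -> r1 <= r0).

Definition c_fat (c : R) (S : point -> Prop) : Prop :=
  exists R0 r0, min_enclosing_radius S R0 /\ max_inscribed_radius S r0 /\
    R0 / r0 <= c.

(* regular terrain w.r.t. c: P0 convex, obstacles convex (automatic here,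
   polygons are convex hulls) and c-fat *)
Definition regular (c : R) (T : terrain) : Prop :=
  wf_terrain T /\ Forall (fun O => c_fat c (open_cpoly O)) (tObs T).

Definition seg_in (T : terrain) (a b : point) : Prop :=
  forall t, 0 <= t <= 1 -> in_terrain T (padd a (pscale t (psub b a))).

Definition sees (T : terrain) (a b : point) : Prop :=
  seg_in T a b /\ dist a b <= 1.

Definition max_free_radius (T : terrain) (q : point) (rho : R) : Prop :=
  (forall x, dist q x <= rho -> in_terrain T x) /\
  (forall r, (forall x, dist q x <= r -> in_terrain T x) -> r <= rho).

Definition accessibility (T : terrain) (q : point) (lam : R) : Prop :=
  exists rho, max_free_radius T q rho /\ lam = Rmin 1 rho.

Fixpoint ppath (T : terrain) (a : point) (l : list point) (b : point) : Prop :=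
  match l with
  | nil => seg_in T a b
  | x :: l' => seg_in T a x /\ ppath T x l' b
  end.

Fixpoint plen (a : point) (l : list point) (b : point) : R :=
  match l with
  | nil => dist a b
  | x :: l' => dist a x + plen x l' b
  end.

Definition shortest_length (T : terrain) (p q : point) (L : R) : Prop :=
  (exists l, ppath T p l q /\ plen p l q = L) /\
  (forall l, ppath T p l q -> L <= plen p l q).

Definition advice := list bool.
Definition oracle := terrain -> point -> point -> advice.
(* Given the advice, the terrain and the start p, the agent's trajectory,
   in coordinates relative to p, parametrized by arc length (time s >= 0). *)
Definition algorithm := advice -> terrain -> point -> (R -> point).

Definition unit_speed_polygonal (g : R -> point) : Prop :=
  g 0 = pzero /\
  exists tau : nat -> R, tau 0%nat = 0 /\
    (forall i, tau i < tau (S i)) /\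
    (forall M, exists i, M <= tau i) /\
    (forall i, dist (g (tau i)) (g (tau (S i))) = tau (S i) - tau i) /\
    (forall i s, tau i <= s <= tau (S i) ->
       g s = padd (g (tau i))
               (pscale ((s - tau i) / (tau (S i) - tau i))
                       (psub (g (tau (S i))) (g (tau i))))).

(* what the agent perceives at relative position x: the set of points it
   sees, in coordinates relative to the start p *)
Definition perceived (T : terrain) (p x y : point) : Prop :=
  sees T (padd p x) (padd p y).

Definition valid_algorithm (c : R) (A : algorithm) : Prop :=
  (forall a T p, regular c T -> in_terrain T p ->
     unit_speed_polygonal (A a T p) /\
     forall s, 0 <= s -> in_terrain T (padd p (A a T p s))) /\
  (* determinism: the trajectory up to time t depends only on the advice
     and on what was perceived along it up to time t *)
  (forall a T1 p1 T2 p2 t, regular c T1 -> in_terrain T1 p1 ->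
     regular c T2 -> in_terrain T2 p2 -> 0 <= t ->
     (forall s, 0 <= s <= t -> forall y,
        perceived T1 p1 (A a T1 p1 s) y <-> perceived T2 p2 (A a T1 p1 s) y) ->
     forall s, 0 <= s <= t -> A a T2 p2 s = A a T1 p1 s).

(* Put the treasure q at one of K^2 points of a grid of spacing 8, at distance L = Theta(K)
   from the start, in a large empty square room with a small square obstacle at distance lam
   to the right of q. Until the agent comes within distance 3 of q it cannot tell this
   terrain from the empty room, so the empty-room trajectory selected by the advice passes
   within 3 of q before time C L <= 18 C K. Advice shorter than (1/2) log2 (L / lam) < m
   selects one of fewer than 2^m trajectories, and a unit-speed trajectory passes within 3
   of at most T + 1 grid points up to time T. Hence K^2 <= 2^m (18 C K + 1), which fails
   for K = 2^m e with e > 18 C + 1. *)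

From Stdlib Require Import Reals List Lra Lia ZArith Classical ClassicalEpsilon.
From Stdlib Require Rgeom.
Open Scope R_scope.

Lemma Rabs_le_inv x k : Rabs x <= k -> -k <= x <= k.
Proof. unfold Rabs; destruct (Rcase_abs x); lra. Qed.

Lemma dist_sym a b : dist a b = dist b a.
Proof. unfold dist. f_equal. ring. Qed.

Lemma dist_pos a b : 0 <= dist a b.
Proof. apply sqrt_pos. Qed.

Lemma dist_refl a : dist a a = 0.
Proof. unfold dist. replace (_ + _) with 0 by ring. apply sqrt_0. Qed.

Lemma dist_triangle a b c : dist a c <= dist a b + dist b c.
Proof.
  destruct a as [a1 a2], b as [b1 b2], c as [c1 c2]. unfold dist; cbn [fst snd].
  pose proof (Rgeom.triangle a1 a2 c1 c2 b1 b2) as H.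
  unfold Rgeom.dist_euc, Rsqr in H. rewrite <- !Rsqr_pow2. exact H.
Qed.

Lemma Rabs_fst_le_dist a b : Rabs (fst a - fst b) <= dist a b.
Proof.
  unfold dist. rewrite <- (sqrt_pow2 (Rabs _)) by apply Rabs_pos.
  apply sqrt_le_1_alt. rewrite pow2_abs. pose proof (pow2_ge_0 (snd a - snd b)). lra.
Qed.

Lemma Rabs_snd_le_dist a b : Rabs (snd a - snd b) <= dist a b.
Proof.
  unfold dist. rewrite <- (sqrt_pow2 (Rabs _)) by apply Rabs_pos.
  apply sqrt_le_1_alt. rewrite pow2_abs. pose proof (pow2_ge_0 (fst a - fst b)). lra.
Qed.

Lemma dist_le_sqrt2 a b k : 0 <= k ->
  Rabs (fst a - fst b) <= k -> Rabs (snd a - snd b) <= k -> dist a b <= k * sqrt 2.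
Proof.
  intros Hk H1 H2. unfold dist.
  rewrite <- (sqrt_pow2 k Hk), <- sqrt_mult by (try apply pow2_ge_0; lra).
  apply sqrt_le_1_alt. rewrite <- (pow2_abs (fst a - fst b)), <- (pow2_abs (snd a - snd b)).
  pose proof (Rabs_pos (fst a - fst b)). pose proof (Rabs_pos (snd a - snd b)). nra.
Qed.

Lemma dist_segment_point a b t :
  dist a (padd a (pscale t (psub b a))) = Rabs t * dist a b.
Proof.
  unfold dist, padd, pscale, psub; cbn [fst snd].
  replace (_ + _) with (t ^ 2 * ((fst a - fst b) ^ 2 + (snd a - snd b) ^ 2)) by ring.
  rewrite sqrt_mult by (try apply Rplus_le_le_0_compat; apply pow2_ge_0).
  rewrite <- pow2_abs, sqrt_pow2 by apply Rabs_pos. reflexivity.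
Qed.

Lemma dist_scale_diff a v u u' :
  dist (padd a (pscale u v)) (padd a (pscale u' v)) = Rabs (u - u') * dist v pzero.
Proof.
  unfold dist, padd, pscale, pzero; cbn [fst snd].
  replace (_ + _) with ((u - u') ^ 2 * ((fst v - 0) ^ 2 + (snd v - 0) ^ 2)) by ring.
  rewrite sqrt_mult by (try apply Rplus_le_le_0_compat; apply pow2_ge_0).
  rewrite <- pow2_abs, sqrt_pow2 by apply Rabs_pos. reflexivity.
Qed.

Lemma dist_psub_pzero b a : dist (psub b a) pzero = dist b a.
Proof. unfold dist, psub, pzero; cbn [fst snd]. f_equal. ring. Qed.

Lemma padd_pzero_l x : padd pzero x = x.
Proof. destruct x; unfold padd, pzero; cbn; f_equal; ring. Qed.

Lemma dist_shift_fst z t : dist z (fst z + t, snd z) = Rabs t.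
Proof.
  unfold dist; cbn [fst snd]. rewrite <- (sqrt_pow2 (Rabs t)) by apply Rabs_pos.
  f_equal. rewrite pow2_abs. ring.
Qed.

Lemma dist_shift_snd z t : dist z (fst z, snd z + t) = Rabs t.
Proof.
  unfold dist; cbn [fst snd]. rewrite <- (sqrt_pow2 (Rabs t)) by apply Rabs_pos.
  f_equal. rewrite pow2_abs. ring.
Qed.

Section PolygonalTrajectory.
Variables (g : R -> point) (tau : nat -> R).
Hypothesis tau_lt : forall i, tau i < tau (S i).
Hypothesis tau_unbounded : forall M, exists i, M <= tau i.
Hypothesis tau_0 : tau 0%nat = 0.
Hypothesis segment_length : forall i, dist (g (tau i)) (g (tau (S i))) = tau (S i) - tau i.
Hypothesis segment_affine : forall i s, tau i <= s <= tau (S i) ->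
  g s = padd (g (tau i))
          (pscale ((s - tau i) / (tau (S i) - tau i)) (psub (g (tau (S i))) (g (tau i)))).

Lemma tau_le i j : (i <= j)%nat -> tau i <= tau j.
Proof.
  induction 1 as [|j _ IH]; [lra|]. pose proof (tau_lt j). lra.
Qed.

Lemma tau_cover s : 0 <= s -> exists i, tau i <= s <= tau (S i).
Proof.
  intros Hs. destruct (tau_unbounded s) as [n Hn]. induction n as [|n IH].
  - exists 0%nat. pose proof (tau_lt 0). lra.
  - destruct (Rle_dec s (tau n)) as [Hle|Hgt]; [now apply IH|]. exists n. lra.
Qed.

Lemma dist_within_segment i s s' : tau i <= s <= tau (S i) -> tau i <= s' <= tau (S i) ->
  dist (g s) (g s') = Rabs (s - s').
Proof.
  intros Hs Hs'. pose proof (tau_lt i).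
  rewrite (segment_affine i s Hs), (segment_affine i s' Hs'), dist_scale_diff, dist_psub_pzero,
    dist_sym, segment_length.
  replace ((s - tau i) / (tau (S i) - tau i) - (s' - tau i) / (tau (S i) - tau i))
    with ((s - s') / (tau (S i) - tau i)) by (field; lra).
  unfold Rdiv. rewrite Rabs_mult, Rabs_inv, (Rabs_right (tau (S i) - tau i)) by lra.
  field. lra.
Qed.

Lemma dist_across_segments i j s s' : (i <= j)%nat ->
  tau i <= s <= tau (S i) -> tau j <= s' <= tau (S j) -> s <= s' ->
  dist (g s) (g s') <= s' - s.
Proof.
  intros Hij Hs Hs' Hss'. revert s' Hs' Hss'. induction Hij as [|j Hij IH]; intros s' Hs' Hss'.
  - rewrite (dist_within_segment i s s' Hs Hs'), Rabs_left1; lra.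
  - pose proof (tau_le (S i) (S j) ltac:(lia)). pose proof (tau_lt j).
    assert (Hmid : dist (g s) (g (tau (S j))) <= tau (S j) - s) by (apply IH; lra).
    pose proof (dist_triangle (g s) (g (tau (S j))) (g s')).
    rewrite (dist_within_segment (S j) (tau (S j)) s') in * by (try pose proof (tau_lt (S j)); lra).
    rewrite Rabs_left1 in *; lra.
Qed.

End PolygonalTrajectory.

Lemma unit_speed_polygonal_lipschitz g : unit_speed_polygonal g ->
  forall s s', 0 <= s -> 0 <= s' -> dist (g s) (g s') <= Rabs (s - s').
Proof.
  intros [_ [tau [tau_0 [tau_lt [tau_unb [Hlen Haff]]]]]].
  assert (Hle : forall s s', 0 <= s -> s <= s' -> dist (g s) (g s') <= s' - s).
  { intros s s' Hs Hss'.
    destruct (tau_cover tau tau_lt tau_unb tau_0 s Hs) as [i Hi].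
    destruct (tau_cover tau tau_lt tau_unb tau_0 s' ltac:(lra)) as [j Hj].
    destruct (le_lt_dec i j) as [Hij|Hji].
    - exact (dist_across_segments g tau tau_lt Hlen Haff i j s s' Hij Hi Hj Hss').
    - pose proof (tau_le tau tau_lt (S j) i Hji).
      replace s' with s by lra. rewrite dist_refl. lra. }
  intros s s' Hs Hs'. destruct (Rle_dec s s').
  - rewrite Rabs_left1 by lra. pose proof (Hle s s' Hs). lra.
  - rewrite Rabs_right, dist_sym by lra. pose proof (Hle s' s Hs'). lra.
Qed.

Definition square (z : point) (h : R) : list point :=
  (fst z - h, snd z - h) :: (fst z + h, snd z - h) ::
  (fst z + h, snd z + h) :: (fst z - h, snd z + h) :: nil.

Lemma in_hull_square z h x : 0 < h ->
  in_hull (square z h) x <->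
  fst z - h <= fst x <= fst z + h /\ snd z - h <= snd x <= snd z + h.
Proof.
  intros Hh. split.
  - intros [w [Hl [Hw [Hs ->]]]].
    destruct w as [|w1 [|w2 [|w3 [|w4 [|w5 w]]]]]; cbn in Hl; try discriminate.
    apply Forall_cons_iff in Hw as [H1 Hw]; apply Forall_cons_iff in Hw as [H2 Hw].
    apply Forall_cons_iff in Hw as [H3 Hw]; apply Forall_cons_iff in Hw as [H4 _].
    cbn in Hs |- *. split; split; nra.
  - destruct x as [x y]; cbn [fst snd]. intros [Hx Hy].
    set (u := (x - (fst z - h)) / (2 * h)). set (v := (y - (snd z - h)) / (2 * h)).
    assert (Eu : u * (2 * h) = x - (fst z - h)) by (unfold u; field; lra).
    assert (Ev : v * (2 * h) = y - (snd z - h)) by (unfold v; field; lra).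
    assert (Hu : 0 <= u <= 1) by nra. assert (Hv : 0 <= v <= 1) by nra.
    exists ((1 - u) * (1 - v) :: u * (1 - v) :: u * v :: (1 - u) * v :: nil).
    split; [reflexivity|]. split; [repeat (constructor; [nra|]); constructor|]. split; [cbn; ring|].
    unfold square, combo, padd, pscale, pzero; cbn [fst snd].
    f_equal; nra.
Qed.

Lemma open_cpoly_square z h x : 0 < h ->
  open_cpoly (square z h) x <->
  fst z - h < fst x < fst z + h /\ snd z - h < snd x < snd z + h.
Proof.
  intros Hh. unfold open_cpoly, pinterior. split.
  - intros [r [Hr Hin]].
    assert (Hfst : forall t, Rabs t < r -> fst z - h <= fst x + t <= fst z + h).
    { intros t Ht. apply (in_hull_square z h (fst x + t, snd x) Hh), Hin.
      now rewrite dist_shift_fst. }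
    assert (Hsnd : forall t, Rabs t < r -> snd z - h <= snd x + t <= snd z + h).
    { intros t Ht. apply (in_hull_square z h (fst x, snd x + t) Hh), Hin.
      now rewrite dist_shift_snd. }
    assert (Hr1 : Rabs (r / 2) < r) by (rewrite Rabs_right; lra).
    assert (Hr2 : Rabs (- (r / 2)) < r) by (rewrite Rabs_Ropp, Rabs_right; lra).
    pose proof (Hfst _ Hr1). pose proof (Hfst _ Hr2).
    pose proof (Hsnd _ Hr1). pose proof (Hsnd _ Hr2). lra.
  - intros Hx.
    set (r := Rmin (Rmin (fst x - (fst z - h)) (fst z + h - fst x))
                   (Rmin (snd x - (snd z - h)) (snd z + h - snd x))).
    assert (Hr : 0 < r) by (unfold r; repeat apply Rmin_glb_lt; lra).
    exists r. split; [exact Hr|]. intros y Hy. apply in_hull_square; [exact Hh|].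
    pose proof (Rabs_le_inv _ _ (Rabs_fst_le_dist x y)).
    pose proof (Rabs_le_inv _ _ (Rabs_snd_le_dist x y)).
    unfold r, Rmin in Hy. repeat destruct Rle_dec; lra.
Qed.

Lemma nondegenerate_square z h : 0 < h -> nondegenerate (square z h).
Proof. intros Hh. exists z. apply open_cpoly_square; lra. Qed.

Lemma Rle_of_forall_sub_le h k r : 0 < h -> 0 < k ->
  (forall e, 0 < e < h -> (h - e) * k <= r) -> h * k <= r.
Proof.
  intros Hh Hk H. destruct (Rle_dec (h * k) r) as [Hle|Hgt]; [exact Hle|exfalso].
  set (e := Rmin (h / 2) ((h * k - r) / (2 * k))).
  assert (He : 0 < e) by (apply Rmin_glb_lt; [|apply Rdiv_lt_0_compat]; lra).
  assert (Eh : e <= h / 2) by apply Rmin_l.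
  assert (Ek : e * k <= (h * k - r) / 2).
  { replace ((h * k - r) / 2) with ((h * k - r) / (2 * k) * k) by (field; lra).
    apply Rmult_le_compat_r; [lra | apply Rmin_r]. }
  pose proof (H e ltac:(lra)). lra.
Qed.

Lemma dist_diagonal z a : 0 <= a ->
  dist (fst z - a, snd z - a) (fst z + a, snd z + a) = 2 * a * sqrt 2.
Proof.
  intros Ha. unfold dist; cbn [fst snd].
  rewrite <- (sqrt_pow2 (2 * a)), <- sqrt_mult by (try apply pow2_ge_0; lra).
  f_equal. ring.
Qed.

Lemma min_enclosing_radius_square z h : 0 < h ->
  min_enclosing_radius (open_cpoly (square z h)) (h * sqrt 2).
Proof.
  intros Hh. pose proof (sqrt_lt_R0 2 ltac:(lra)) as Hs2. split.
  - exists z. intros x Hx. apply open_cpoly_square in Hx as [Hx Hy]; [|exact Hh].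
    apply dist_le_sqrt2; [lra | apply Rabs_le; lra ..].
  - intros w R1 HR. apply Rle_of_forall_sub_le; [exact Hh | exact Hs2 |].
    intros e He.
    assert (Hlo : dist w (fst z - (h - e), snd z - (h - e)) <= R1)
      by (apply HR, open_cpoly_square; cbn [fst snd]; lra).
    assert (Hhi : dist w (fst z + (h - e), snd z + (h - e)) <= R1)
      by (apply HR, open_cpoly_square; cbn [fst snd]; lra).
    pose proof (dist_triangle (fst z - (h - e), snd z - (h - e)) w
                              (fst z + (h - e), snd z + (h - e))).
    rewrite dist_diagonal, (dist_sym _ w) in * by lra. lra.
Qed.

Lemma max_inscribed_radius_square z h : 0 < h ->
  max_inscribed_radius (open_cpoly (square z h)) h.
Proof.
  intros Hh. split.
  - exists z. intros x Hx. apply open_cpoly_square; [exact Hh|].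
    pose proof (Rabs_le_inv _ _ (Rabs_fst_le_dist z x)).
    pose proof (Rabs_le_inv _ _ (Rabs_snd_le_dist z x)). lra.
  - intros w r1 Hr. destruct (Rle_dec r1 h) as [Hle|Hgt]; [exact Hle|exfalso].
    assert (Hright : open_cpoly (square z h) (fst w + h, snd w))
      by (apply Hr; rewrite dist_shift_fst, Rabs_right; lra).
    assert (Hleft : open_cpoly (square z h) (fst w + - h, snd w))
      by (apply Hr; rewrite dist_shift_fst, Rabs_left; lra).
    apply open_cpoly_square in Hright, Hleft; cbn [fst snd] in *; lra.
Qed.

Lemma c_fat_square c z h : sqrt 2 <= c -> 0 < h -> c_fat c (open_cpoly (square z h)).
Proof.
  intros Hc Hh. exists (h * sqrt 2), h.
  split; [now apply min_enclosing_radius_square|].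
  split; [now apply max_inscribed_radius_square|].
  replace (h * sqrt 2 / h) with (sqrt 2) by (field; lra). exact Hc.
Qed.

Lemma dist_le_plen a l b : dist a b <= plen a l b.
Proof.
  revert a. induction l as [|x l IH]; intros a; cbn [plen]; [lra|].
  pose proof (IH x). pose proof (dist_triangle a x b). lra.
Qed.

Section Rooms.
Variables (lam M : R).
Hypothesis lam_range : 0 < lam <= 1.
Hypothesis M_pos : 0 < M.

Definition room : terrain := Terrain (square pzero M) nil.
(* The left side of the obstacle lies at distance [lam] from [q], which makes the
   accessibility of [q] exactly [lam]. *)
Definition obstacle (q : point) : list point := square (fst q + lam + 1/4, snd q) (1/4).
Definition room_with_obstacle (q : point) : terrain :=
  Terrain (square pzero M) (obstacle q :: nil).
Definition admissible_treasure (q : point) : Prop :=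
  0 <= fst q /\ 0 <= snd q /\ fst q + 2 <= M /\ snd q + 2 <= M.

Lemma in_room x : in_terrain room x <-> -M <= fst x <= M /\ -M <= snd x <= M.
Proof.
  unfold in_terrain, closed_cpoly; cbn. rewrite in_hull_square by exact M_pos.
  unfold pzero; cbn [fst snd]. split.
  - intros [H _]. repeat split; lra.
  - intros H. split; [repeat split; lra | constructor].
Qed.

Lemma in_room_with_obstacle q x :
  in_terrain (room_with_obstacle q) x <-> in_terrain room x /\ ~ open_cpoly (obstacle q) x.
Proof.
  unfold in_terrain; cbn. rewrite Forall_cons_iff. split; [tauto|].
  intros [[H _] Ho]. auto.
Qed.

Lemma open_obstacle q x : open_cpoly (obstacle q) x <->
  fst q + lam < fst x < fst q + lam + 1/2 /\ snd q - 1/4 < snd x < snd q + 1/4.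
Proof.
  unfold obstacle. rewrite open_cpoly_square by lra. cbn [fst snd].
  split; intros H; repeat split; lra.
Qed.

Lemma regular_room c : regular c room.
Proof.
  split; [|constructor]. split; [now apply nondegenerate_square|].
  split; [constructor|]. split; [constructor|]. cbn. lia.
Qed.

Lemma regular_room_with_obstacle c q : sqrt 2 <= c -> admissible_treasure q ->
  regular c (room_with_obstacle q).
Proof.
  intros Hc Hq. split.
  - split; [now apply nondegenerate_square|].
    split; [constructor; [apply nondegenerate_square; lra | constructor]|].
    split; [|cbn; lia].
    constructor; [|constructor]. intros x Hx. apply open_obstacle in Hx.
    apply open_cpoly_square; [exact M_pos|]. unfold admissible_treasure, pzero in *.
    cbn [fst snd]. lra.
  - constructor; [|constructor]. apply c_fat_square; lra.
Qed.

Lemma in_room_with_obstacle_near q x : admissible_treasure q -> dist q x <= lam ->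
  in_terrain (room_with_obstacle q) x.
Proof.
  intros Hq Hx. unfold admissible_treasure in Hq.
  pose proof (Rabs_le_inv _ _ (Rle_trans _ _ _ (Rabs_fst_le_dist q x) Hx)).
  pose proof (Rabs_le_inv _ _ (Rle_trans _ _ _ (Rabs_snd_le_dist q x) Hx)).
  apply in_room_with_obstacle. rewrite in_room, open_obstacle. split; [repeat split; lra | lra].
Qed.

Lemma accessibility_room_with_obstacle q : admissible_treasure q ->
  accessibility (room_with_obstacle q) q lam.
Proof.
  intros Hq. exists lam. split; [split|].
  - intros x Hx. now apply in_room_with_obstacle_near.
  - intros r Hr. destruct (Rle_dec r lam) as [Hle|Hgt]; [exact Hle|exfalso].
    set (t := Rmin r (lam + 1/4)).
    assert (Ht : lam < t <= r /\ t <= lam + 1/4)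
      by (unfold t; repeat split; [apply Rmin_glb_lt | apply Rmin_l | apply Rmin_r]; lra).
    assert (Hin : in_terrain (room_with_obstacle q) (fst q + t, snd q))
      by (apply Hr; rewrite dist_shift_fst, Rabs_right; lra).
    apply in_room_with_obstacle in Hin as [_ Hout]. apply Hout, open_obstacle.
    cbn [fst snd]. lra.
  - unfold Rmin. destruct (Rle_dec 1 lam); lra.
Qed.

Lemma interior_room_with_obstacle q : admissible_treasure q ->
  pinterior (in_terrain (room_with_obstacle q)) q.
Proof.
  intros Hq. exists lam. split; [lra|]. intros y Hy.
  apply in_room_with_obstacle_near; [exact Hq | lra].
Qed.

Lemma origin_in_room : in_terrain room pzero.
Proof. apply in_room. unfold pzero; cbn. lra. Qed.

Lemma origin_in_room_with_obstacle q : admissible_treasure q ->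
  in_terrain (room_with_obstacle q) pzero.
Proof.
  intros Hq. apply in_room_with_obstacle. split; [exact origin_in_room|].
  rewrite open_obstacle. unfold admissible_treasure, pzero in *. cbn. lra.
Qed.

Lemma shortest_length_room_with_obstacle q : admissible_treasure q ->
  shortest_length (room_with_obstacle q) pzero q (dist pzero q).
Proof.
  intros Hq. split.
  - exists nil. split; [|reflexivity]. intros t Ht.
    unfold admissible_treasure in Hq. apply in_room_with_obstacle.
    rewrite in_room, open_obstacle. unfold padd, pscale, psub, pzero; cbn [fst snd].
    split; [repeat split|]; nra.
  - intros l _. apply dist_le_plen.
Qed.

Lemma dist_obstacle_lt q x : open_cpoly (obstacle q) x -> dist q x < 2.
Proof.
  intros Hx. apply open_obstacle in Hx. unfold dist.
  rewrite <- (sqrt_pow2 2) by lra. apply sqrt_lt_1_alt.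
  split; [apply Rplus_le_le_0_compat; apply pow2_ge_0 | nra].
Qed.

Lemma sees_room_with_obstacle_far q x y : 3 < dist x q ->
  sees (room_with_obstacle q) x y <-> sees room x y.
Proof.
  intros Hfar. unfold sees, seg_in. split; intros [Hseg Hxy]; split; auto; intros t Ht.
  - exact (proj1 (proj1 (in_room_with_obstacle q _) (Hseg t Ht))).
  - apply in_room_with_obstacle. split; [now apply Hseg|]. intros Hobs.
    apply dist_obstacle_lt in Hobs.
    pose proof (dist_segment_point x y t). rewrite Rabs_right in * by lra.
    pose proof (dist_triangle x (padd x (pscale t (psub y x))) q) as Htri.
    rewrite (dist_sym (padd _ _) q) in Htri.
    assert (t * dist x y <= 1) by (pose proof (dist_pos x y); nra).
    lra.
Qed.

End Rooms.

Lemma injective_below_le (f : nat -> nat) (N K : nat) :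
  (forall n, (n < N)%nat -> (f n < K)%nat) ->
  (forall n n', (n < N)%nat -> (n' < N)%nat -> f n = f n' -> n = n') ->
  (N <= K)%nat.
Proof.
  intros Hrange Hinj.
  assert (Hnodup : NoDup (map f (seq 0 N))).
  { apply NoDup_map_NoDup_ForallPairs; [|apply seq_NoDup].
    intros n n' Hn Hn'. apply in_seq in Hn, Hn'. apply Hinj; lia. }
  assert (Hincl : incl (map f (seq 0 N)) (seq 0 K)).
  { intros k Hk. apply in_map_iff in Hk as [n [<- Hn]]. apply in_seq in Hn.
    apply in_seq. pose proof (Hrange n ltac:(lia)). lia. }
  pose proof (NoDup_incl_length Hnodup Hincl) as H.
  now rewrite length_map, !length_seq in H.
Qed.

Lemma mul_add_inj (a b x y B : nat) :
  (x < B)%nat -> (y < B)%nat -> (a * B + x = b * B + y)%nat -> a = b /\ x = y.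
Proof.
  intros Hx Hy H.
  assert (Hdiv : forall c z, (z < B)%nat -> ((c * B + z) / B = c)%nat).
  { intros c z Hz. rewrite Nat.div_add_l, Nat.div_small by lia. lia. }
  pose proof (Hdiv a x Hx) as Ha. rewrite H, Hdiv in Ha by exact Hy. subst. lia.
Qed.

(* Binary expansion behind a leading 1, so that strings of different lengths get
   different codes. *)
Fixpoint advice_code (l : list bool) : nat :=
  match l with
  | nil => 1%nat
  | b :: l' => (2 * advice_code l' + (if b then 1 else 0))%nat
  end.

Lemma advice_code_pos l : (1 <= advice_code l)%nat.
Proof. induction l as [|[] l IH]; cbn; lia. Qed.

Lemma advice_code_inj l1 l2 : advice_code l1 = advice_code l2 -> l1 = l2.
Proof.
  revert l2; induction l1 as [|b1 l1 IH]; intros [|b2 l2]; cbn; intros H; auto.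
  - pose proof (advice_code_pos l2). destruct b2; lia.
  - pose proof (advice_code_pos l1). destruct b1; lia.
  - destruct b1, b2; try lia; f_equal; apply IH; lia.
Qed.

Lemma advice_code_lt_pow2 l m : (length l < m)%nat -> (advice_code l < 2 ^ m)%nat.
Proof.
  revert m. induction l as [|b l IH]; intros m Hm; cbn [advice_code length] in *.
  - destruct m; [lia|]. rewrite Nat.pow_succ_r'. pose proof (Nat.pow_nonzero 2 m). lia.
  - destruct m as [|m]; [lia|]. rewrite Nat.pow_succ_r'.
    pose proof (IH m ltac:(lia)). destruct b; lia.
Qed.

Definition nfloor (t : R) : nat := Z.to_nat (Int_part t).

Lemma nfloor_spec t : 0 <= t -> INR (nfloor t) <= t < INR (nfloor t) + 1.
Proof.
  intros Ht. destruct (base_Int_part t) as [H1 H2].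
  assert (Hz : (0 <= Int_part t)%Z).
  { assert (Hgt : -1 < IZR (Int_part t)) by lra. apply lt_IZR in Hgt. lia. }
  unfold nfloor. rewrite INR_IZR_INZ, Z2Nat.id by exact Hz. lra.
Qed.

Lemma bounded_choice {X : Type} (x0 : X) (N : nat) (P : nat -> X -> Prop) :
  (forall n, (n < N)%nat -> exists x, P n x) ->
  exists f : nat -> X, forall n, (n < N)%nat -> P n (f n).
Proof.
  intros H. apply (choice (fun n x => (n < N)%nat -> P n x)). intros n.
  destruct (lt_dec n N) as [Hn|Hn].
  - destruct (H n Hn) as [x Hx]. now exists x.
  - exists x0. lia.
Qed.

(* Tag each point by its advice string and the integer part of its visiting time: two points
   with the same tag are visited by the same trajectory less than one time unit apart. *)
Lemma packing_bound (g : advice -> R -> point) (q : nat -> point) (N m : nat) (r Tmax : R) :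
  0 <= Tmax ->
  (forall a s s', 0 <= s -> 0 <= s' -> dist (g a s) (g a s') <= Rabs (s - s')) ->
  (forall n n', (n < N)%nat -> (n' < N)%nat -> dist (q n) (q n') < 2 * r + 1 -> n = n') ->
  (forall n, (n < N)%nat -> exists a t,
     (length a < m)%nat /\ 0 <= t <= Tmax /\ dist (g a t) (q n) <= r) ->
  INR N <= 2 ^ m * (Tmax + 1).
Proof.
  intros HT Hlip Hsep Hvisit.
  destruct (bounded_choice (nil, 0) N
    (fun n v => (length (fst v) < m)%nat /\ 0 <= snd v <= Tmax /\
                dist (g (fst v) (snd v)) (q n) <= r)) as [v Hv].
  { intros n Hn. destruct (Hvisit n Hn) as [a [t H]]. now exists (a, t). }
  set (B := S (nfloor Tmax)).
  assert (Hfloor : forall n, (n < N)%nat -> (nfloor (snd (v n)) < B)%nat).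
  { intros n Hn. destruct (Hv n Hn) as [_ [Ht _]]. unfold B.
    pose proof (nfloor_spec _ (proj1 Ht)). pose proof (nfloor_spec Tmax HT).
    apply INR_lt. rewrite S_INR. lra. }
  assert (HN : (N <= 2 ^ m * B)%nat).
  { apply (injective_below_le (fun n => advice_code (fst (v n)) * B + nfloor (snd (v n))))%nat.
    - intros n Hn. pose proof (Hfloor n Hn). destruct (Hv n Hn) as [Hlen _].
      pose proof (advice_code_lt_pow2 _ _ Hlen).
      assert (advice_code (fst (v n)) * B + B <= 2 ^ m * B)%nat
        by (rewrite <- Nat.mul_succ_l; apply Nat.mul_le_mono_r; lia).
      lia.
    - intros n n' Hn Hn' Heq.
      destruct (mul_add_inj _ _ _ _ _ (Hfloor n Hn) (Hfloor n' Hn') Heq) as [Hcode Hfl].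
      apply advice_code_inj in Hcode.
      destruct (Hv n Hn) as [_ [Ht Hd]]. destruct (Hv n' Hn') as [_ [Ht' Hd']].
      rewrite <- Hcode in Hd'.
      pose proof (nfloor_spec _ (proj1 Ht)). pose proof (nfloor_spec _ (proj1 Ht')).
      assert (Hclose : Rabs (snd (v n) - snd (v n')) < 1)
        by (apply Rabs_def1; rewrite Hfl in *; lra).
      pose proof (Hlip (fst (v n)) _ _ (proj1 Ht) (proj1 Ht')).
      pose proof (dist_triangle (q n) (g (fst (v n)) (snd (v n))) (q n')).
      pose proof (dist_triangle (g (fst (v n)) (snd (v n))) (g (fst (v n)) (snd (v n'))) (q n')).
      rewrite dist_sym in Hd.
      apply Hsep; [exact Hn | exact Hn' | lra]. }
  apply le_INR in HN. rewrite mult_INR, pow_INR in HN.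
  replace (INR 2) with 2 in HN by (cbn; ring). unfold B in HN. rewrite S_INR in HN.
  pose proof (nfloor_spec Tmax HT). pose proof (pow_lt 2 m ltac:(lra)). nra.
Qed.

Definition grid (K n : nat) : point := (8 * INR K + 8 * INR (n / K), 8 * INR (n mod K)).

Lemma grid_coords_lt K n : (n < K * K)%nat ->
  INR (n / K) + 1 <= INR K /\ INR (n mod K) + 1 <= INR K.
Proof.
  intros Hn. assert (K <> 0%nat) by lia. rewrite <- !S_INR. split; apply le_INR.
  - assert (n / K < K)%nat by (apply Nat.Div0.div_lt_upper_bound; lia). lia.
  - assert (n mod K < K)%nat by (apply Nat.mod_upper_bound; lia). lia.
Qed.

Lemma grid_admissible K n : (n < K * K)%nat ->
  admissible_treasure (16 * INR K + 10) (grid K n).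
Proof.
  intros Hn. pose proof (grid_coords_lt K n Hn).
  pose proof (pos_INR (n / K)). pose proof (pos_INR (n mod K)).
  unfold admissible_treasure, grid; cbn [fst snd]. lra.
Qed.

Lemma grid_dist_origin K n : (n < K * K)%nat ->
  8 * INR K <= dist pzero (grid K n) <= 18 * INR K.
Proof.
  intros Hn. pose proof (grid_coords_lt K n Hn).
  pose proof (pos_INR (n / K)). pose proof (pos_INR (n mod K)). split.
  - pose proof (Rabs_fst_le_dist (grid K n) pzero) as Hfst. rewrite dist_sym in Hfst.
    unfold grid, pzero in *; cbn [fst snd] in *. rewrite Rabs_right in Hfst; lra.
  - unfold dist, grid, pzero; cbn [fst snd].
    rewrite <- (sqrt_pow2 (18 * INR K)) by lra. apply sqrt_le_1_alt. nra.
Qed.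

Lemma INR_eq_of_close u u' : Rabs (INR u - INR u') < 1 -> u = u'.
Proof.
  intros H. destruct (Nat.lt_total u u') as [Hlt|[Heq|Hlt]]; [exfalso | exact Heq | exfalso];
    apply le_INR in Hlt; rewrite S_INR in Hlt.
  - rewrite Rabs_left in H; lra.
  - rewrite Rabs_right in H; lra.
Qed.

Lemma grid_separated K n n' : dist (grid K n) (grid K n') < 7 -> n = n'.
Proof.
  intros Hd.
  pose proof (Rle_lt_trans _ _ _ (Rabs_fst_le_dist (grid K n) (grid K n')) Hd) as Hfst.
  pose proof (Rle_lt_trans _ _ _ (Rabs_snd_le_dist (grid K n) (grid K n')) Hd) as Hsnd.
  unfold grid in Hfst, Hsnd; cbn [fst snd] in Hfst, Hsnd.
  assert (Hq : (n / K = n' / K)%nat).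
  { apply INR_eq_of_close. apply Rabs_def1; apply Rabs_def2 in Hfst; lra. }
  assert (Hr : (n mod K = n' mod K)%nat).
  { apply INR_eq_of_close. apply Rabs_def1; apply Rabs_def2 in Hsnd; lra. }
  rewrite (Nat.div_mod_eq n K), (Nat.div_mod_eq n' K), Hq, Hr. reflexivity.
Qed.

Lemma lt_of_half_log2_lt (k m : nat) (x : R) : 0 < x < 4 ^ m ->
  INR k < / 2 * log2 x -> (k < m)%nat.
Proof.
  intros Hx Hk. apply INR_lt.
  assert (Hln2 : 0 < ln 2) by (rewrite <- ln_1; apply ln_increasing; lra).
  assert (Hln : ln x < INR m * (2 * ln 2)).
  { replace (2 * ln 2) with (ln 4) by (replace 4 with (2 * 2) by lra; rewrite ln_mult by lra; ring).
    rewrite <- ln_pow by lra. now apply ln_increasing. }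
  unfold log2 in Hk. apply (Rmult_lt_compat_r (/ ln 2)) in Hln; [|now apply Rinv_0_lt_compat].
  replace (INR m * (2 * ln 2) * / ln 2) with (2 * INR m) in Hln by (field; lra).
  unfold Rdiv in Hk. lra.
Qed.

Lemma pow2_unbounded x : exists m, x < 2 ^ m.
Proof.
  destruct (INR_unbounded x) as [m Hm]. exists m.
  enough (INR m <= 2 ^ m) by lra. clear Hm. induction m as [|m IH]; [cbn; lra|].
  rewrite S_INR. cbn [pow]. pose proof (pow_R1_Rle 2 m ltac:(lra)). lra.
Qed.

Lemma choose_scales C L0 lam : 0 < lam ->
  exists e m : nat, 18 * C + 1 < INR e /\ L0 < 2 ^ m /\ 18 * INR e < lam * 2 ^ m.
Proof.
  intros Hlam. destruct (INR_unbounded (18 * C + 1)) as [e He].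
  destruct (pow2_unbounded (Rmax L0 (18 * INR e / lam))) as [m Hm].
  exists e, m. split; [lra|]. split.
  - pose proof (Rmax_l L0 (18 * INR e / lam)). lra.
  - pose proof (Rmax_r L0 (18 * INR e / lam)).
    apply (Rmult_lt_reg_r (/ lam)); [now apply Rinv_0_lt_compat|].
    replace (lam * 2 ^ m * / lam) with (2 ^ m) by (field; lra). unfold Rdiv in *. lra.
Qed.

Definition linear_cost_hunt (c lam : R) (A : algorithm) (O : oracle) (C L0 : R) : Prop :=
  forall (T : terrain) (p q : point) (L : R),
    regular c T -> in_terrain T p -> pinterior (in_terrain T) q ->
    accessibility T q lam -> shortest_length T p q L ->
    (exists s, 0 <= s <= C * L /\ sees T (padd p (A (O T p q) T p s)) q) /\
    (L0 <= L -> INR (length (O T p q)) < / 2 * log2 (L / lam)).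

Section Adversary.
Variables (c lam C L0 : R) (A : algorithm) (O : oracle).
Hypothesis c_ge : sqrt 2 <= c.
Hypothesis lam_range : 0 < lam <= 1.
Hypothesis C_pos : 0 < C.
Hypothesis A_valid : valid_algorithm c A.
Hypothesis A_hunts : linear_cost_hunt c lam A O C L0.

Lemma room_trajectory_lipschitz M a : 0 < M ->
  forall s s', 0 <= s -> 0 <= s' ->
  dist (A a (room M) pzero s) (A a (room M) pzero s') <= Rabs (s - s').
Proof.
  intros HM. apply unit_speed_polygonal_lipschitz, (proj1 A_valid).
  - now apply regular_room.
  - now apply origin_in_room.
Qed.

Lemma hunt_in_room_with_obstacle M q : admissible_treasure M q ->
  (exists s, 0 <= s <= C * dist pzero q /\
     sees (room_with_obstacle lam M q)
       (A (O (room_with_obstacle lam M q) pzero q) (room_with_obstacle lam M q) pzero s) q) /\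
  (L0 <= dist pzero q ->
     INR (length (O (room_with_obstacle lam M q) pzero q)) < / 2 * log2 (dist pzero q / lam)).
Proof.
  intros Hq. assert (HM : 0 < M) by (unfold admissible_treasure in Hq; lra).
  destruct (A_hunts (room_with_obstacle lam M q) pzero q (dist pzero q)) as [[s Hs] Hlen].
  - now apply regular_room_with_obstacle.
  - now apply origin_in_room_with_obstacle.
  - now apply interior_room_with_obstacle.
  - now apply accessibility_room_with_obstacle.
  - now apply shortest_length_room_with_obstacle.
  - rewrite padd_pzero_l in Hs. split; [now exists s | exact Hlen].
Qed.

(* Until it comes within distance 3 of q, the agent cannot tell the room with the obstacle
   from the empty room, so it follows its empty-room trajectory. *)
Lemma passes_near_treasure M q : admissible_treasure M q ->
  exists t, 0 <= t <= C * dist pzero q /\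
    dist (A (O (room_with_obstacle lam M q) pzero q) (room M) pzero t) q <= 3.
Proof.
  intros Hq. assert (HM : 0 < M) by (unfold admissible_treasure in Hq; lra).
  set (T := room_with_obstacle lam M q). set (a := O T pzero q).
  destruct (proj1 (hunt_in_room_with_obstacle M q Hq)) as [s [Hs [_ Hsee]]].
  fold T a in Hsee.
  apply NNPP. intros Hnear.
  assert (Hfar : forall t, 0 <= t <= s -> 3 < dist (A a (room M) pzero t) q).
  { intros t Ht. apply Rnot_le_lt. intros Hle. apply Hnear. exists t. split; [lra | exact Hle]. }
  assert (Hsame : A a T pzero s = A a (room M) pzero s).
  { apply (proj2 A_valid a (room M) pzero T pzero s).
    - now apply regular_room.
    - now apply origin_in_room.
    - now apply regular_room_with_obstacle.
    - now apply origin_in_room_with_obstacle.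
    - lra.
    - intros t Ht y. unfold perceived. rewrite !padd_pzero_l. symmetry.
      apply sees_room_with_obstacle_far; [exact lam_range | now apply Hfar].
    - lra. }
  rewrite Hsame in Hsee. pose proof (Hfar s ltac:(lra)). lra.
Qed.

Lemma advice_length_lt M q (m : nat) : admissible_treasure M q ->
  0 < dist pzero q -> L0 <= dist pzero q -> dist pzero q < lam * 4 ^ m ->
  (length (O (room_with_obstacle lam M q) pzero q) < m)%nat.
Proof.
  intros Hq Hpos HL0 Hlt. apply (lt_of_half_log2_lt _ _ (dist pzero q / lam)).
  - split; [now apply Rdiv_lt_0_compat|].
    apply (Rmult_lt_reg_r lam); [lra|]. unfold Rdiv. rewrite Rmult_assoc, Rinv_l; lra.
  - exact (proj2 (hunt_in_room_with_obstacle M q Hq) HL0).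
Qed.

Lemma grid_visit (K m n : nat) : L0 <= 8 * INR K -> 18 * INR K < lam * 4 ^ m ->
  (n < K * K)%nat ->
  exists a t, (length a < m)%nat /\ 0 <= t <= 18 * C * INR K /\
    dist (A a (room (16 * INR K + 10)) pzero t) (grid K n) <= 3.
Proof.
  intros HL0 Hm Hn.
  pose proof (grid_admissible K n Hn) as Hq. pose proof (grid_dist_origin K n Hn) as HL.
  assert (HK : 1 <= INR K) by (rewrite <- INR_1; apply le_INR; nia).
  destruct (passes_near_treasure _ _ Hq) as [t [Ht Hnear]].
  eexists; exists t. split; [|split; [|exact Hnear]].
  - apply advice_length_lt; [exact Hq | lra ..].
  - split; [lra|]. apply Rle_trans with (C * (18 * INR K)); [|lra].
    apply Rle_trans with (1 := proj2 Ht). apply Rmult_le_compat_l; lra.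
Qed.

End Adversary.

Theorem theorem2p2 (c lam : R) (hc : sqrt 2 <= c) (hlam : 0 < lam <= 1) :
  ~ exists (A : algorithm) (O : oracle) (C : R),
      0 < C /\ valid_algorithm c A /\
      exists L0 : R,
        forall (T : terrain) (p q : point) (L : R),
          regular c T -> in_terrain T p -> pinterior (in_terrain T) q ->
          accessibility T q lam -> shortest_length T p q L ->
          (exists s, 0 <= s <= C * L /\
             sees T (padd p (A (O T p q) T p s)) q) /\
          (L0 <= L -> INR (length (O T p q)) < / 2 * log2 (L / lam)).
Proof.
  intros [A [O [C [HC [HA [L0 Hhunt]]]]]].
  destruct (choose_scales C L0 lam) as [e [m [He [HL0 Hlam]]]]; [lra|].
  pose proof (pow_lt 2 m ltac:(lra)) as Hpow.
  set (K := (2 ^ m * e)%nat).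
  assert (HK : INR K = 2 ^ m * INR e)
    by (unfold K; rewrite mult_INR, pow_INR; f_equal; f_equal; cbn; ring).
  assert (HK1 : 1 <= INR K) by (rewrite HK; nra).
  assert (Hcount : INR (K * K) <= 2 ^ m * (18 * C * INR K + 1)).
  { apply (packing_bound (fun a => A a (room (16 * INR K + 10)) pzero) (grid K) _ _ 3).
    - nra.
    - intros a. apply (room_trajectory_lipschitz c A HA). lra.
    - intros n n' _ _ Hd. apply (grid_separated K). lra.
    - intros n Hn. apply (grid_visit c lam C L0 A O hc hlam HC HA Hhunt); [nra | | exact Hn].
      replace 4 with (2 * 2) by ring. rewrite Rpow_mult_distr, HK. nra. }
  assert (Hcancel : INR e * INR K <= 18 * C * INR K + 1).
  { apply (Rmult_le_reg_l (2 ^ m)); [exact Hpow|].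
    now rewrite <- Rmult_assoc, <- HK, <- mult_INR. }
  nra.
Qed.
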